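(* Let $k\ge 1$ and let $G$ be a minimally $k$-connected graph with $n$ vertices and maximum degree $\Delta$. Then $$|V_k|\;\ge\;\frac{(k-1)n+2\,(c_F+|E_k|)+\max\{0,\Delta-(k+1)\}}{2k-1}.$$
   Context: All graphs are finite, simple and undirected. A $k$-separator is a set of $k\ge 0$ vertices whose deletion leaves a disconnected graph. A graph is $k$-connected if it has more than $k$ vertices and contains no $(k-1)$-separator. A $k$-connected graph $G$ is minimally $k$-connected if $G-e$ is not $k$-connected for every edge $e$. For a graph $G$: $V_k$ is the set of vertices of degree exactly $k$; $E_k$ is the set of edges of $G$ with both end vertices in $V_k$; $F:=G-V_k$ is the graph obtained by deleting $V_k$; and $c_F$ is the number of connected components of $F$. *)

(* A finite simple graph on vertex type T is a symmetric,
   irreflexive relation e : rel T; its vertex set is all of T. *)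
From HB Require Import structures.
From mathcomp Require Import all_boot all_order all_algebra.
Set Implicit Arguments. Unset Strict Implicit. Unset Printing Implicit Defensive.
Import Order.TTheory GRing.Theory Num.Theory.

Section Graphs.
Variable T : finType.

Definition simple_graph (e : rel T) : Prop := symmetric e /\ irreflexive e.

Definition del_vertices (e : rel T) (S : {set T}) : rel T :=
  [rel x y | [&& x \notin S, y \notin S & e x y]].

Definition connected_after (e : rel T) (S : {set T}) : Prop :=
  forall x y, x \notin S -> y \notin S -> connect (del_vertices e S) x y.

Definition separator (e : rel T) (k : nat) (S : {set T}) : Prop :=
  #|S| = k /\ ~ connected_after e S.

Definition k_connected (e : rel T) (k : nat) : Prop :=
  k < #|T| /\ forall S : {set T}, ~ separator e k.-1 S.

Definition del_edge (e : rel T) (u v : T) : rel T :=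
  [rel x y | e x y && ~~ (((x == u) && (y == v)) || ((x == v) && (y == u)))].

Definition minimally_k_connected (e : rel T) (k : nat) : Prop :=
  k_connected e k /\ forall u v, e u v -> ~ k_connected (del_edge e u v) k.

Definition deg (e : rel T) (v : T) : nat := #|[set u | e v u]|.

Definition max_deg (e : rel T) : nat := \max_(v : T) deg e v.

Definition Vdeg (e : rel T) (k : nat) : {set T} := [set v | deg e v == k].

Definition Edeg (e : rel T) (k : nat) : {set {set T}} :=
  [set p : {set T} | [exists u, exists v,
     [&& u \in Vdeg e k, v \in Vdeg e k, e u v & p == [set u; v]]]].

(* c_F : number of connected components of F = G - V_k, counted as the
   number of distinct vertex sets of components *)
Definition num_components (e : rel T) (S : {set T}) : nat :=
  #|[set C : {set T} | [exists x, (x \notin S) &&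
       (C == [set y | connect (del_vertices e S) x y])]]|.

End Graphs.

From HB Require Import structures.
From mathcomp Require Import all_boot all_order all_algebra.
From mathcomp Require Import zify.
From Stdlib Require Import Classical_Prop.
Import Order.TTheory GRing.Theory Num.Theory.
Set Implicit Arguments. Unset Strict Implicit. Unset Printing Implicit Defensive.

(* By Mader's theorem the vertices of degree greater than k induce a forest
   F = G - V_k, which has at most |F| - c_F edges.  The degrees of the vertices
   of V_k add up to k |V_k| = 2 |E_k| + e(V_k, F), while every vertex of F has
   degree at least k + 1 and one of them has degree Delta if Delta > k + 1, so
   e(V_k, F) + 2 (|F| - c_F) >= (k + 1) |F| + max(0, Delta - (k + 1)).
   Eliminating e(V_k, F) using n = |V_k| + |F| gives the bound. *)

Section Separations.
Variables (T : finType) (e : rel T).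

Lemma connect_closed_in (r : rel T) (R : {set T}) x y :
  (forall a b, r a b -> a \in R -> b \in R) -> x \in R -> connect r x y -> y \in R.
Proof.
move=> Rr xR /connectP [p rp ->]; elim: p x xR rp => [|a p IHp] x xR //= /andP [rxa rp].
exact: IHp (Rr _ _ rxa xR) rp.
Qed.

Lemma exists_subset_card (P : {set T}) m :
  m <= #|P| -> exists2 Q : {set T}, Q \subset P & #|Q| = m.
Proof.
case/card_geqP=> s [s_uniq s_size sP]; exists [set x in s].
  by apply/subsetP=> x; rewrite inE => /sP.
by rewrite cardsE (card_uniqP _) // s_uniq.
Qed.

Lemma k_connected_cut_card k (R N : {set T}) w z :
  k_connected e k -> w \in R -> z \notin R -> z \notin N ->
  (forall a b, a \in R -> b \notin R -> e a b -> b \in N) -> k <= #|N|.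
Proof.
move=> [kT no_sep] wR zR zN RN; rewrite leqNgt; apply/negP => Nk.
set N0 := N :\: R.
have N0N : #|N0| <= #|N| by rewrite subset_leq_card // subsetDl.
have : k.-1 - #|N0| <= #|~: (N0 :|: [set w; z])|.
  move: kT (leq_card_setU N0 [set w; z]).1; rewrite -(cardsC (N0 :|: [set w; z])) cards2.
  by case: (w != z) => /=; lia.
case/exists_subset_card=> Q QP cQ.
have N0Q : [disjoint N0 & Q].
  apply/pred0P=> v /=; apply/andP=> -[vN vQ].
  by have := subsetP QP v vQ; rewrite in_setC in_setU vN.
apply: (no_sep (N0 :|: Q)); split.
  by move/leqifP: (leq_card_setU N0 Q); rewrite N0Q cQ => /eqP ->; lia.
move/(_ w z) => wz.
have wS : w \notin N0 :|: Q.
  by rewrite !inE wR /=; apply/negP => /(subsetP QP); rewrite !inE eqxx orbT.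
have zS : z \notin N0 :|: Q.
  by rewrite !inE (negbTE zN) andbF /=; apply/negP => /(subsetP QP); rewrite !inE eqxx !orbT.
suff : z \in R by rewrite (negbTE zR).
apply: connect_closed_in (wz wS zS) => // a b /= /and3P [_ bS eab] aR.
by apply/negPn/negP => bR; move: bS; rewrite !inE (negbTE bR) (RN a b aR bR eab).
Qed.

Lemma k_connected_deg k v : k_connected e k -> k <= deg e v.
Proof.
move=> e_kconn; have [kT _] := e_kconn.
case: (boolP [exists w, (w != v) && ~~ e v w]) => [/existsP [w /andP [wv nevw]]|/existsPn vfull].
  apply: (k_connected_cut_card (R := [set v]) (w := v) (z := w) e_kconn); rewrite ?inE //.
  by move=> a b; rewrite !inE => /eqP -> _ evb.
have : #|[set: T]| <= #|v |: [set u | e v u]|.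
  apply/subset_leq_card/subsetP=> w _; rewrite !inE.
  by case: eqVneq (vfull w) => //= _; rewrite negbK.
rewrite cardsT cardsU1 => /(leq_trans kT).
by case: (_ \notin _) => /=; rewrite /deg; lia.
Qed.

(* [A] is the side containing [x] of a separation of [G - xy] by [S], with [y]
   on the other side. *)
Definition edge_side k x y (A S : {set T}) : Prop :=
  [/\ x \in A, y \notin A, y \notin S, #|S| <= k.-1 &
   forall a b, a \in A -> b \notin A -> e a b -> b \in S \/ (a = x /\ b = y)].

Lemma del_vertices_sym (r : rel T) S : symmetric r -> symmetric (del_vertices r S).
Proof. by move=> r_sym a b; rewrite /del_vertices /= r_sym andbCA. Qed.

Lemma del_edge_sym (r : rel T) x y : symmetric r -> symmetric (del_edge r x y).
Proof.
move=> r_sym a b; rewrite /del_edge /= r_sym; case: (r b a) => //=.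
by rewrite orbC (andbC (b == x)) (andbC (b == y)).
Qed.

Hypothesis e_sym : symmetric e.

Lemma edge_side_out k x y (A S : {set T}) a b :
  edge_side k x y A S -> a \in A -> e a b -> b \notin A -> b \notin S -> a = x /\ b = y.
Proof. by case=> _ _ _ _ AS aA eab bA bS; case: (AS a b aA bA eab) => //; rewrite (negbTE bS). Qed.

Lemma edge_side_in k x y (A S : {set T}) a b :
  edge_side k x y A S -> a \notin A -> a \notin S -> e a b -> b \in A -> a = y /\ b = x.
Proof.
case=> _ _ _ _ AS aA aS eab bA; rewrite e_sym in eab.
by case: (AS b a bA aA eab) => [|[-> ->]] //; rewrite (negbTE aS).
Qed.

Lemma edge_side_flip k x y (A S : {set T}) :
  x \notin S -> edge_side k x y A S -> edge_side k y x (~: (A :|: S)) S.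
Proof.
move=> xS sideA; have [xA yA yS cS AS] := sideA; split => //.
- by rewrite !inE negb_or yA.
- by rewrite !inE xA.
move=> a b; rewrite !inE negb_or negbK => /andP [aA aS] /orP [bA|bS] eab; last by left.
by have [-> ->] := edge_side_in sideA aA aS eab bA; right.
Qed.

Lemma edge_side_setD k x y (A S : {set T}) : edge_side k x y A S -> edge_side k x y A (S :\: A).
Proof.
case=> xA yA yS cS AS; split => //.
- by rewrite inE negb_and yS orbT.
- by apply: leq_trans cS; rewrite subset_leq_card // subsetDl.
move=> a b aA bA eab; case: (AS a b aA bA eab) => [bS|]; last by right.
by left; rewrite inE bA.
Qed.

(* Otherwise G - xy is still k-connected: for |S| = k - 1, G - S is connected,
   and x, y are joined in G - xy - S, since the component of x there would be
   a side. *)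
Lemma minimally_k_connected_edge_side k x y :
  minimally_k_connected e k -> e x y -> exists A S, edge_side k x y A S.
Proof.
move=> [[kT no_sep] e_min] exy; apply: NNPP => no_side.
apply: (e_min x y exy); split => // S [cS]; apply => a b aS bS.
set r := del_vertices (del_edge e x y) S.
have ab : connect (del_vertices e S) a b.
  by apply: NNPP => nab; apply: (no_sep S); split => // /(_ a b aS bS).
have r_sym : connect_sym r by apply/sym_connect_sym/del_vertices_sym/del_edge_sym.
have xy : x \notin S -> y \notin S -> connect r x y.
  move=> xS yS; apply/negPn/negP => nxy; apply: no_side.
  exists [set v | connect r x v], S; split; rewrite ?inE ?connect0 ?cS //.
  move=> c d; rewrite !inE => xc xd ecd.
  case: (boolP (d \in S)) => [|dS]; first by left.
  case: (boolP ((c == x) && (d == y))) => [/andP [/eqP -> /eqP ->]|ncd]; first by right.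
  have cS' : c \notin S.
    rewrite -in_setC; apply: connect_closed_in (xc); last by rewrite inE.
    by move=> u v /and3P [_ vS _] _; rewrite inE.
  case/negP: xd; apply: connect_trans (xc) (connect1 _).
  apply/and3P; split => //=; rewrite /del_edge /= ecd negb_or ncd /=.
  by apply/negP => /andP [/eqP cy _]; move: nxy; rewrite -cy xc.
apply: connect_sub ab => c d /and3P [cS' dS ecd].
case: (boolP ((c == x) && (d == y) || (c == y) && (d == x))) => [|ncd].
  by case/orP => /andP [/eqP cx /eqP dy]; subst c d; [|rewrite r_sym]; apply: xy.
by apply/connect1/and3P; split => //; rewrite /del_edge /= ecd.
Qed.

End Separations.

Lemma leq_card_setU3 (T : finType) (X Y Z : {set T}) :
  #|X :|: Y :|: Z| <= #|X| + #|Y| + #|Z|.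
Proof. by rewrite (leq_trans (leq_card_setU _ _).1) // leq_add2r (leq_card_setU _ _).1. Qed.

Lemma cards_split3 (T : finType) (X P Q : {set T}) :
  (forall v, v \in P -> v \notin Q) ->
  #|X| = #|X :&: P| + #|X :&: Q| + #|X :&: ~: (P :|: Q)|.
Proof.
move=> PQ; rewrite -(cardsID P X) -addnA -(cardsID Q (X :\: P)).
have -> : (X :\: P) :&: Q = X :&: Q.
  apply/setP => v; rewrite !inE.
  by case: (boolP (v \in P)) => vP; rewrite ?(negbTE (PQ v vP)) ?andbF.
have -> // : X :\: P :\: Q = X :&: ~: (P :|: Q).
by apply/setP => v; rewrite !inE negb_or; case: (v \in P); case: (v \in Q); case: (v \in X).
Qed.

(* [aR] stands for #|A :&: R|, and so on, for the two crossing separations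
   (A, S, B) and (C, R, D) of the section below. *)
Lemma crossing_count k sC sR sD aC aR aD bC bR bD : 0 < k ->
  sC + sR + sD <= k.-1 -> aR + sR + bR <= k.-1 -> 0 < aC ->
  aC + aR + aD <= bC + bR + bD -> aC + aR + aD <= aD + sD + bD ->
  k <= sC + aR + sR + 1 ->
  (0 < bD -> k <= sD + bR + sR) ->
  (0 < aD -> k <= sD + aR + sR) ->
  (0 < bC -> k <= sC + bR + sR + 1) ->
  (aD = 0 -> 0 < sD) -> False.
Proof.
move=> k_gt0 cS cR aC_gt0 AB AD sepAC BD_sep AD_sep BC_sep AD0_SD.
case: (posnP bD) => [bD0|/BD_sep]; last by lia.
case: (posnP aD) => [/AD0_SD|/AD_sep]; first by lia.
by case: (posnP bC) => [|/BC_sep]; lia.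
Qed.

(* A separation (A, S, B) of G - xy, with A minimal among the sides of edges
   inside K, and a separation (C, R, D) of G - xz cannot coexist. *)
Section Crossing.
Variables (T : finType) (e : rel T) (k : nat) (K : {set T}).
Hypotheses (e_sym : symmetric e) (e_irr : irreflexive e).
Hypotheses (k_gt0 : 0 < k) (e_kconn : k_connected e k).
Variables (x y z : T) (A S C R : {set T}).
Hypotheses (xK : x \in K) (yK : y \in K) (zK : z \in K).
Hypotheses (exy : e x y) (exz : e x z) (z_neq_y : z != y) (x_deg : k < deg e x).
Hypotheses (sideA : edge_side e k x y A S) (AS_disj : forall w, w \in A -> w \notin S).
Hypotheses (sideC : edge_side e k x z C R) (CR_disj : forall w, w \in C -> w \notin R).
Hypothesis A_min : forall x' y' (A' S' : {set T}), x' \in K -> y' \in K -> e x' y' ->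
  edge_side e k x' y' A' S' -> #|A| <= #|A'|.

Let B := ~: (A :|: S).
Let D := ~: (C :|: R).

Let xA : x \in A. Proof. by case: sideA. Qed.
Let xC : x \in C. Proof. by case: sideC. Qed.
Let xS : x \notin S. Proof. exact: AS_disj. Qed.
Let xR : x \notin R. Proof. exact: CR_disj. Qed.
Let yB : y \in B. Proof. by case: sideA => _ yA yS _ _; rewrite !inE negb_or yA yS. Qed.
Let zD : z \in D. Proof. by case: sideC => _ zC zR _ _; rewrite !inE negb_or zC zR. Qed.

Lemma y_in_CR : (y \in C) || (y \in R).
Proof.
apply/negPn/negP; rewrite negb_or => /andP [yC yR].
by have [_ yz] := edge_side_out sideC xC exy yC yR; move: z_neq_y; rewrite yz eqxx.
Qed.

Lemma z_in_AS : (z \in A) || (z \in S).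
Proof.
apply/negPn/negP; rewrite negb_or => /andP [zA zS].
by have [_ zy] := edge_side_out sideA xA exz zA zS; move: z_neq_y; rewrite zy eqxx.
Qed.

Lemma card_A_le_B : #|A| <= #|B|.
Proof. by apply: (A_min yK xK _ (edge_side_flip e_sym xS sideA)); rewrite e_sym. Qed.

Lemma card_A_le_D : #|A| <= #|D|.
Proof. by apply: (A_min zK xK _ (edge_side_flip e_sym xR sideC)); rewrite e_sym. Qed.

(* [x] has more than [k] neighbours, and all of them except [y] and those in
   [S] lie in [A]. *)
Lemma exists_A_neq_x : exists2 a, a \in A & a != x.
Proof.
have [_ _ _ cS _] := sideA.
have : 0 < #|[set u | e x u] :\: (S :|: [set y])|.
  rewrite cardsD subn_gt0; apply: leq_ltn_trans (subset_leq_card (subsetIr _ _)) _.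
  apply: leq_ltn_trans (leq_card_setU S [set y]).1 (leq_trans _ x_deg).
  by rewrite cards1 addn1 -(prednK k_gt0) ltnS.
case/card_gt0P => u; rewrite !inE negb_or => /andP [/andP [uS uy] exu].
exists u; last by apply/eqP => ux; rewrite ux e_irr in exu.
apply/negPn/negP => uA.
by have [_ /eqP] := edge_side_out sideA xA exu uA uS; rewrite (negbTE uy).
Qed.

Lemma corner_BD_card : 0 < #|B :&: D| -> k <= #|S :&: D| + #|B :&: R| + #|S :&: R|.
Proof.
case/card_gt0P => w wBD; apply: leq_trans (leq_card_setU3 _ _ _).
apply: (k_connected_cut_card (z := x) e_kconn wBD); first by rewrite !inE xA.
  by rewrite !inE xA (negbTE xS) (negbTE xR) xC.
move=> a b; rewrite !inE !negb_or => /andP [/andP [aA aS] /andP [aC aR]] bBD eab.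
have bA : b \notin A.
  apply/negP => bA; have [ay _] := edge_side_in e_sym sideA aA aS eab bA.
  by move: y_in_CR; rewrite -ay (negbTE aC) (negbTE aR).
have bC : b \notin C.
  apply/negP => bC; have [az _] := edge_side_in e_sym sideC aC aR eab bC.
  by move: z_in_AS; rewrite -az (negbTE aA) (negbTE aS).
by move: bBD; rewrite (negbTE bA) (negbTE bC); case: (b \in S); case: (b \in R).
Qed.

Lemma corner_AC_card :
  #|S :&: C| + #|A :&: R| + #|S :&: R| + 1 <= k.-1 -> #|A| <= #|A :&: C|.
Proof.
move=> small; have [_ yA yS _ _] := sideA.
apply: (@A_min x y _ ((S :&: C) :|: (A :&: R) :|: (S :&: R) :|: [set z]) xK yK exy); split.
- by rewrite inE xA xC.
- by rewrite inE (negbTE yA).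
- by rewrite !inE (negbTE yS) (negbTE yA) eq_sym (negbTE z_neq_y).
- apply: leq_trans small; rewrite (leq_trans (leq_card_setU _ _).1) //.
  by rewrite cards1 leq_add2r leq_card_setU3.
move=> a b; rewrite !inE => /andP [aA aC] bAC eab.
case: (boolP ((a == x) && (b == y))) => [/andP [/eqP -> /eqP ->]|nxy]; first by right.
left; case: (eqVneq b z) => [->|bz]; first by rewrite orbT.
have bAS : (b \in A) || (b \in S).
  apply/negPn/negP; rewrite negb_or => /andP [bA bS].
  by have [ax bY] := edge_side_out sideA aA eab bA bS; rewrite ax bY !eqxx in nxy.
have bCR : (b \in C) || (b \in R).
  apply/negPn/negP; rewrite negb_or => /andP [bC bR].
  by have [_ /eqP] := edge_side_out sideC aC eab bC bR; rewrite (negbTE bz).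
move: bAC bAS bCR; rewrite orbF.
by case: (b \in A); case: (b \in S); case: (b \in C); case: (b \in R).
Qed.

Lemma corner_AD_out a b : a \in A :&: D -> b \notin A :&: D -> e a b ->
  b \in (S :&: D) :|: (A :&: R) :|: (S :&: R) \/ (a = z /\ b = x).
Proof.
rewrite !inE !negb_or => /andP [aA /andP [aC aR]] bAD eab.
case: (boolP ((a == z) && (b == x))) => [/andP [/eqP -> /eqP ->]|nzx]; first by right.
left; have bAS : (b \in A) || (b \in S).
  apply/negPn/negP; rewrite negb_or => /andP [bA bS].
  by have [ax _] := edge_side_out sideA aA eab bA bS; move: aC; rewrite ax xC.
have bC : b \notin C.
  apply/negP => bC; have [az bx] := edge_side_in e_sym sideC aC aR eab bC.
  by rewrite az bx !eqxx in nzx.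
move: bAD bAS; rewrite (negbTE bC) /=.
by case: (b \in A); case: (b \in S); case: (b \in R).
Qed.

Lemma corner_AD_card : 0 < #|A :&: D| -> k <= #|S :&: D| + #|A :&: R| + #|S :&: R|.
Proof.
case/card_gt0P => w wAD; apply: leq_trans (leq_card_setU3 _ _ _).
have x_notin_AD : x \notin A :&: D by rewrite !inE xC /= andbF.
have x_notin_sep : x \notin (S :&: D) :|: (A :&: R) :|: (S :&: R).
  by rewrite !inE (negbTE xS) (negbTE xR) /= andbF.
case/orP: z_in_AS => [zA|zS].
  rewrite leqNgt; apply/negP => small.
  have : #|A| <= #|A :&: D|.
    apply: (@A_min z x _ ((S :&: D) :|: (A :&: R) :|: (S :&: R)) zK xK); first by rewrite e_sym.
    split => //; first by rewrite inE zA zD.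
      by move: small; case: (k).
    exact: corner_AD_out.
  by rewrite leqNgt (proper_card (properIl _)) //; apply/subsetPn; exists x; rewrite // !inE xC.
apply: (k_connected_cut_card (z := x) e_kconn wAD) => // a b aAD bAD eab.
case: (corner_AD_out aAD bAD eab) => // [[az _]].
by move: aAD; rewrite inE az => /andP [/AS_disj]; rewrite zS.
Qed.

Lemma corner_BC_card : 0 < #|B :&: C| -> k <= #|S :&: C| + #|B :&: R| + #|S :&: R| + 1.
Proof.
case/card_gt0P => w wBC; have [_ zC zR _ _] := sideC.
have z_neq_x : z != x by apply/eqP => zx; move: exz; rewrite zx e_irr.
apply: (@leq_trans #|(S :&: C) :|: (B :&: R) :|: (S :&: R) :|: [set x]|); last first.
  by rewrite (leq_trans (leq_card_setU _ _).1) // cards1 leq_add2r leq_card_setU3.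
apply: (k_connected_cut_card (z := z) e_kconn wBC).
- by rewrite !inE (negbTE zC) andbF.
- by rewrite !inE (negbTE zC) (negbTE zR) (negbTE z_neq_x) !andbF.
move=> a b; rewrite !inE !negb_or => /andP [/andP [aA aS] aC] bBC eab.
case: (eqVneq b x) => [_|bx]; first by rewrite orbT.
have bA : b \notin A.
  by apply/negP => bA; have [_ /eqP] := edge_side_in e_sym sideA aA aS eab bA; rewrite (negbTE bx).
have bCR : (b \in C) || (b \in R).
  apply/negPn/negP; rewrite negb_or => /andP [bC bR].
  by have [ax _] := edge_side_out sideC aC eab bC bR; move: aA; rewrite ax xA.
move: bBC bCR; rewrite (negbTE bA) /=.
by case: (b \in S); case: (b \in C); case: (b \in R).
Qed.

(* Otherwise [z], which lies outside [C], is in [S], and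
   [(S :&: C) :|: (S :&: R) :|: [set x]] separates [y] from the vertices of
   [A] other than [x]; this leaves no room in [S] for [z]. *)
Lemma A_not_subset_C : ~~ (A \subset C).
Proof.
apply/negP => /subsetP AC; have [_ zC _ _ _] := sideC; have [_ _ _ cS _] := sideA.
have zS : z \in S by case/orP: z_in_AS => // /AC; rewrite (negbTE zC).
have SD_gt0 : 0 < #|S :&: D| by apply/card_gt0P; exists z; rewrite inE zS zD.
have [a aA a_neq_x] := exists_A_neq_x.
have : k <= #|(S :&: C) :|: (S :&: R) :|: [set x]|.
  apply: (k_connected_cut_card (w := y) (R := D :|: B) (z := a) e_kconn).
  - by rewrite inE yB orbT.
  - by rewrite !inE (AC a aA) aA.
  - by rewrite !inE (negbTE (AS_disj aA)) (negbTE a_neq_x).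
  move=> c b; rewrite !inE !negb_or => cDB bDB ecb.
  case: (boolP (b \in S)) => bS.
    by move: bDB; rewrite bS /=; case: (b \in C); case: (b \in R).
  case: (boolP (b \in A)) => bA; last by move: bDB; rewrite (negbTE bA) (negbTE bS) /= andbF.
  apply/orP; right; apply/eqP.
  case/orP: cDB => /andP [cX cY].
    by have [_ ->] := edge_side_in e_sym sideC cX cY ecb (AC b bA).
  by have [_ ->] := edge_side_in e_sym sideA cX cY ecb bA.
move/leq_trans/(_ (leq_card_setU3 _ _ _)); rewrite cards1 => k_le.
have : #|S :&: C| + #|S :&: R| + 1 <= #|S| by rewrite (cards_split3 S CR_disj) leq_add2l.
by move/(leq_trans k_le)/leq_trans/(_ cS); rewrite leqNgt ltn_predL k_gt0.
Qed.

Lemma crossing_contradiction : False.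
Proof.
have [_ _ _ cS _] := sideA; have [_ _ _ cR _] := sideC.
have AC_lt : #|A :&: C| < #|A| := proper_card (properIl A_not_subset_C).
have sepAC : k <= #|S :&: C| + #|A :&: R| + #|S :&: R| + 1.
  rewrite leqNgt; apply/negP => small.
  by move: AC_lt; rewrite ltnNge corner_AC_card //; move: small; case: (k).
have AC_gt0 : 0 < #|A :&: C| by apply/card_gt0P; exists x; rewrite inE xA xC.
have S_small : #|S :&: C| + #|S :&: R| + #|S :&: D| <= k.-1.
  by rewrite -(cards_split3 S CR_disj).
have R_small : #|A :&: R| + #|S :&: R| + #|B :&: R| <= k.-1.
  by rewrite (setIC A) (setIC S) (setIC B) -(cards_split3 R AS_disj).
have AB : #|A :&: C| + #|A :&: R| + #|A :&: D| <= #|B :&: C| + #|B :&: R| + #|B :&: D|.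
  by rewrite -(cards_split3 A CR_disj) -(cards_split3 B CR_disj) card_A_le_B.
have AD : #|A :&: C| + #|A :&: R| + #|A :&: D| <= #|A :&: D| + #|S :&: D| + #|B :&: D|.
  rewrite -(cards_split3 A CR_disj) (setIC A) (setIC S) (setIC B).
  by rewrite -(cards_split3 D AS_disj) card_A_le_D.
apply: (crossing_count k_gt0 S_small R_small AC_gt0 AB AD sepAC
  corner_BD_card corner_AD_card corner_BC_card).
move=> AD0; apply/card_gt0P; exists z; rewrite in_setI zD andbT.
case/orP: z_in_AS => // zA; move/eqP: AD0; rewrite cards_eq0 => /eqP/setP/(_ z).
by rewrite in_setI zA zD in_set0.
Qed.

End Crossing.

Lemma minimally_k_connected_disjoint_side (T : finType) (e : rel T) k x y :
  symmetric e -> minimally_k_connected e k -> e x y ->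
  exists A S, edge_side e k x y A S /\ (forall w, w \in A -> w \notin S).
Proof.
move=> e_sym e_min /(minimally_k_connected_edge_side e_sym e_min) [A [S sideA]].
by exists A, (S :\: A); split; [exact: edge_side_setD | move=> w wA; rewrite inE wA].
Qed.

(* Mader: the vertices of degree greater than k of a minimally k-connected
   graph induce a forest.  The proof takes an edge xy inside K whose side A is
   as small as possible and crosses it with a side of xz, for another
   neighbour z of x in K. *)
Theorem mader_forest (T : finType) (e : rel T) k (K : {set T}) :
  simple_graph e -> 0 < k -> minimally_k_connected e k ->
  (forall v, v \in K -> k < deg e v) -> K != set0 ->
  exists2 v, v \in K & #|[set u in K | e v u]| <= 1.
Proof.
move=> [e_sym e_irr] k_gt0 e_min K_deg /set0Pn [v vK]; apply: NNPP => no_leaf.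
have K_nbrs u : u \in K -> 1 < #|[set w in K | e u w]|.
  by move=> uK; rewrite ltnNge; apply/negP => u_leaf; apply: no_leaf; exists u.
suff no_side n x y (A S : {set T}) : #|A| <= n -> x \in K -> y \in K -> e x y ->
    edge_side e k x y A S -> False.
  have /card_gt0P [y] := ltnW (K_nbrs v vK).
  rewrite inE => /andP [yK evy].
  have [A [S [sideA _]]] := minimally_k_connected_disjoint_side e_sym e_min evy.
  exact: (no_side _ v y A S (leqnn _) vK yK evy sideA).
elim: n x y A S => [|n IHn] x y A S A_le xK yK exy sideA.
  have [xA _ _ _ _] := sideA.
  by move: A_le; rewrite leqn0 cards_eq0 => /eqP A0; rewrite A0 inE in xA.
have [z] : exists z, z \in [set w in K | e x w] :\ y.
  by apply/card_gt0P; move: (K_nbrs x xK); rewrite (cardsD1 y); lia.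
rewrite !inE => /andP [z_neq_y /andP [zK exz]].
have [C [R [sideC CR_disj]]] := minimally_k_connected_disjoint_side e_sym e_min exz.
apply: (crossing_contradiction e_sym e_irr k_gt0 e_min.1 xK yK zK exy exz z_neq_y
  (K_deg x xK) (edge_side_setD sideA) _ sideC CR_disj).
  by move=> w wA; rewrite inE wA.
move=> x' y' A' S' x'K y'K ex'y' sideA'; rewrite leqNgt; apply/negP => A'_lt.
by apply: (IHn x' y' A' S' _ x'K y'K ex'y' sideA'); rewrite -ltnS (leq_trans A'_lt).
Qed.

Section Components.
Variables (T : finType) (e : rel T).
Hypotheses (e_sym : symmetric e) (e_irr : irreflexive e).

(* Ordered pairs: an edge with both ends in X :&: Y is counted twice. *)
Definition adj_pairs (X Y : {set T}) : nat := \sum_(a in X) \sum_(b in Y) e a b.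

Definition component (S : {set T}) x : {set T} := [set y | connect (del_vertices e S) x y].

Lemma num_componentsE S : num_components e S = #|[set component S x | x in ~: S]|.
Proof.
apply: eq_card => X; rewrite inE.
apply/existsP/imsetP => [[x /andP [xS /eqP ->]]|[x xS ->]]; exists x => //.
  by rewrite inE.
by move: xS; rewrite inE => ->; rewrite eqxx.
Qed.

Lemma component_eq S a b : connect (del_vertices e S) a b -> component S a = component S b.
Proof.
move=> ab; have /sym_connect_sym ab_sym := del_vertices_sym S e_sym.
apply/setP => c; rewrite !inE; apply/idP/idP; last exact: connect_trans.
by apply: connect_trans; rewrite ab_sym.
Qed.

Lemma connect_del_verticesS (S S' : {set T}) a b : S \subset S' ->
  connect (del_vertices e S') a b -> connect (del_vertices e S) a b.
Proof.
move=> /subsetP SS'; apply: connect_sub => c d /and3P [cS' dS' ecd]; apply: connect1.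
by apply/and3P; split => //; [apply: contra (SS' c) cS' | apply: contra (SS' d) dS'].
Qed.

Lemma card_components_subset (S S' X : {set T}) : S \subset S' ->
  #|[set component S x | x in X]| <= #|[set component S' x | x in X]|.
Proof.
move=> SS'; pose f Y := if [pick x in X | component S' x == Y] is Some x
  then component S x else set0.
have -> : [set component S x | x in X] = [set f Y | Y in [set component S' x | x in X]].
  rewrite -imset_comp; apply: eq_in_imset => x xX /=; rewrite /f.
  case: pickP => [x' /andP [x'X /eqP Ex'x]|]; last by move/(_ x); rewrite xX eqxx.
  symmetry; apply/component_eq/(connect_del_verticesS SS').
  have : x \in component S' x by rewrite inE connect0.
  by rewrite -Ex'x inE.
exact: leq_imset_card.
Qed.

Lemma num_components_setU1 (S : {set T}) v : v \notin S ->
  num_components e S <= num_components e (v |: S) + (#|[set u in ~: (v |: S) | e v u]| == 0).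
Proof.
move=> vS; rewrite !num_componentsE.
have -> : ~: S = v |: ~: (v |: S).
  by apply/setP => a; rewrite !inE negb_or; case: eqVneq => [->|].
have le_comp := @card_components_subset S (v |: S) (~: (v |: S)) (subsetUr _ _).
rewrite imsetU1 cardsU1 addnC leq_add //.
case: posnP => [_|/card_gt0P [u]]; first exact: leq_b1.
rewrite inE => /andP [uS evu]; rewrite leqn0 eqb0 negbK.
apply/imsetP; exists u => //; apply/component_eq/connect1.
by move: uS; rewrite !inE negb_or => /andP [_ uS]; apply/and3P.
Qed.

Lemma card_set_sum (K : {set T}) (P : pred T) : #|[set u in K | P u]| = \sum_(u in K) P u.
Proof.
rewrite -sum1_card (eq_bigl (fun u => (u \in K) && P u)) => [|u]; last by rewrite inE.
by rewrite big_mkcondr /=; apply: eq_bigr => u _; case: (P u).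
Qed.

Lemma sum_setC_setU1 (F : T -> nat) (S : {set T}) v : v \notin S ->
  \sum_(a in ~: S) F a = F v + \sum_(a in ~: (v |: S)) F a.
Proof.
move=> vS; rewrite (bigD1 v) ?inE //; congr (_ + _); apply: eq_bigl => a.
by rewrite !inE negb_or andbC.
Qed.

Lemma edge_sum_setU1 (S : {set T}) v : v \notin S ->
  adj_pairs (~: S) (~: S) =
  2 * #|[set u in ~: (v |: S) | e v u]| + adj_pairs (~: (v |: S)) (~: (v |: S)).
Proof.
move=> vS; rewrite /adj_pairs card_set_sum !(sum_setC_setU1 _ vS) e_irr add0n mul2n -addnn -!addnA.
congr (_ + _); rewrite -big_split; apply: eq_bigr => a _.
by rewrite (sum_setC_setU1 _ vS) e_sym.
Qed.

(* A graph in which every nonempty vertex set contains a vertex with at most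
   one neighbour inside the set is a forest: removing such leaves one by one
   shows that it has at most [|F| - c_F] edges. *)
Lemma forest_edge_count (S : {set T}) :
  (forall K : {set T}, K \subset ~: S -> K != set0 ->
     exists2 v, v \in K & #|[set u in K | e v u]| <= 1) ->
  adj_pairs (~: S) (~: S) + 2 * num_components e S <= 2 * #|~: S|.
Proof.
have [n] := ubnP #|~: S|; elim: n S => // n IHn S; rewrite ltnS => S_size F_forest.
have [F0|[v0 v0F]] := set_0Vmem (~: S).
  by rewrite /adj_pairs num_componentsE F0 imset0 cards0 big_set0.
have [v vF v_leaf] : exists2 v, v \in ~: S & #|[set u in ~: S | e v u]| <= 1.
  by apply: F_forest => //; apply/set0Pn; exists v0.
have vS : v \notin S by rewrite -in_setC.
have cardF : #|~: S| = #|~: (v |: S)|.+1.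
  rewrite (cardsD1 v) vF add1n; congr _.+1.
  by apply: eq_card => a; rewrite !inE negb_or.
have F'_forest (K : {set T}) : K \subset ~: (v |: S) -> K != set0 ->
    exists2 u, u \in K & #|[set w in K | e u w]| <= 1.
  by move=> KF; apply: F_forest; apply: subset_trans KF _; rewrite setCS subsetUr.
have := IHn (v |: S); rewrite -ltnS -cardF => /(_ S_size F'_forest).
have leaf : #|[set u in ~: (v |: S) | e v u]| <= 1.
  apply: leq_trans v_leaf; apply/subset_leq_card/subsetP => u.
  by rewrite !inE negb_or => /andP [/andP [_ ->]].
have := num_components_setU1 vS; rewrite (edge_sum_setU1 vS) cardF; lia.
Qed.

End Components.

Section DegreeSums.
Variables (T : finType) (e : rel T).

Lemma deg_split (X : {set T}) v : deg e v = \sum_(u in X) e v u + \sum_(u in ~: X) e v u.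
Proof.
rewrite -!card_set_sum /deg -(cardsID X [set u | e v u]).
by congr (_ + _); apply: eq_card => u; rewrite !inE andbC.
Qed.

Lemma sum_deg_split (X Y : {set T}) :
  \sum_(a in X) deg e a = adj_pairs e X Y + adj_pairs e X (~: Y).
Proof. by rewrite /adj_pairs -big_split; apply: eq_bigr => a _; rewrite (deg_split Y). Qed.

Lemma adj_pairsC (X Y : {set T}) : symmetric e -> adj_pairs e X Y = adj_pairs e Y X.
Proof.
move=> e_sym; rewrite /adj_pairs exchange_big; apply: eq_bigr => b _.
by apply: eq_bigr => a _; rewrite e_sym.
Qed.

(* A vertex of maximum degree lies in X unless max_deg e <= m. *)
Lemma sum_deg_max (X : {set T}) m : 0 < #|T| ->
  (forall v, v \in X -> m <= deg e v) -> (forall v, v \notin X -> deg e v <= m) ->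
  m * #|X| + (max_deg e - m) <= \sum_(v in X) deg e v.
Proof.
move=> T_gt0 X_deg notX_deg.
rewrite (eq_bigr (fun v => m + (deg e v - m))) => [|v vX]; last by rewrite subnKC ?X_deg.
rewrite big_split /= sum_nat_const mulnC leq_add2l.
have [w max_w] := bigop.eq_bigmax (deg e) T_gt0; rewrite /max_deg max_w.
case: (boolP (w \in X)) => [wX|/notX_deg]; last by rewrite -subn_eq0 => /eqP ->.
by rewrite (bigD1 w) //= leq_addr.
Qed.

Lemma card_Edeg k : symmetric e -> irreflexive e ->
  2 * #|Edeg e k| <= adj_pairs e (Vdeg e k) (Vdeg e k).
Proof.
move=> e_sym e_irr; set X := Vdeg e k; rewrite /adj_pairs pair_big /=.
have -> : \sum_(p | (p.1 \in X) && (p.2 \in X)) (e p.1 p.2 : nat) =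
          \sum_(p | [&& p.1 \in X, p.2 \in X & e p.1 p.2]) 1.
  rewrite big_mkcond [RHS]big_mkcond; apply: eq_bigr => p _.
  by case: (p.1 \in X); case: (p.2 \in X); case: (e p.1 p.2).
rewrite (partition_big (fun p => [set p.1; p.2]) (mem (Edeg e k))) /=; last first.
  move=> [u v] /= /and3P [uX vX euv]; rewrite inE.
  by apply/existsP; exists u; apply/existsP; exists v; rewrite uX vX euv eqxx.
rewrite mulnC -sum_nat_const; apply: leq_sum => E.
rewrite inE => /existsP [u /existsP [v /and4P [uX vX euv /eqP ->]]].
have uv : u != v by apply/eqP => uv; rewrite uv e_irr in euv.
rewrite (bigD1 (u, v)) /=; last by rewrite uX vX euv eqxx.
rewrite (bigD1 (v, u)) /=; last first.
  by rewrite vX uX e_sym euv setUC eqxx /= xpair_eqE negb_and eq_sym uv.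
by rewrite addnA leq_addr.
Qed.

End DegreeSums.

Lemma max0_natrB (R : realDomainType) m n :
  (Num.max 0 (m%:R - n%:R) = (m - n)%:R :> R)%R.
Proof.
case: (leqP m n) => mn; first by rewrite (eqP (mn : m - n == 0)) max_l // subr_le0 ler_nat.
by rewrite natrB ?(ltnW mn) // max_r // subr_ge0 ler_nat ltnW.
Qed.

Theorem mainTheorem1 (T : finType) (e : rel T) (k : nat) :
  simple_graph e -> 1 <= k -> minimally_k_connected e k ->
  ((((k - 1) * #|T| + 2 * (num_components e (Vdeg e k) + #|Edeg e k|))%:R
      + Num.max 0 ((max_deg e)%:R - (k + 1)%:R)) / (2 * k - 1)%:R
   <= (#|Vdeg e k|%:R : rat))%R.
Proof.
move=> e_simple k_gt0 e_min; have [e_sym e_irr] := e_simple; have [kT _] := e_min.1.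
set V := Vdeg e k.
have F_deg v : v \in ~: V -> k < deg e v.
  rewrite inE ltn_neqAle (k_connected_deg v e_min.1) andbT.
  by apply: contra => /eqP kv; rewrite /V /Vdeg inE -kv.
have forest := forest_edge_count e_sym e_irr (fun K KF K0 =>
  mader_forest e_simple k_gt0 e_min (fun v vK => F_deg v (subsetP KF v vK)) K0).
have V_sum : k * #|V| = adj_pairs e V V + adj_pairs e V (~: V).
  by rewrite -sum_deg_split mulnC -sum_nat_const; apply: eq_bigr => v; rewrite inE => /eqP.
have V_deg v : v \notin ~: V -> deg e v <= k.+1.
  by rewrite inE negbK /V /Vdeg inE => /eqP ->.
have F_sum := sum_deg_max (leq_ltn_trans (leq0n k) kT) F_deg V_deg.
rewrite (sum_deg_split _ _ V) (adj_pairsC _ _ e_sym) in F_sum.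
have count : (k - 1) * #|T| + 2 * (num_components e V + #|Edeg e k|) + (max_deg e - (k + 1))
    <= (2 * k - 1) * #|V|.
  by move: (cardsC V) (card_Edeg k e_sym e_irr) F_sum forest V_sum; rewrite -/V addn1; nia.
rewrite max0_natrB -natrD ler_pdivrMr ?ltr0n; last by lia.
by rewrite -natrM ler_nat [#|V| * _]mulnC.
Qed.
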